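(* For $n,s\in\mathbb{N}$, $$\overline{H}_n(\overline{s})=\sum_{k=1}^n(-1)^{k-1}\binom{n}{k}\,{}_{s+1}F_s\left(\{\tfrac12\}^{s},1-k;\{\tfrac32\}^{s};-1\right).$$
   Context: $\mathbb{N}$ is the set of positive integers; $\overline{H}_n(\overline{s})=\sum_{k=0}^{n-1}\frac{(-1)^k}{(2k+1)^s}$ (odd alternating harmonic sum); $\{a\}^s$ denotes $a$ repeated $s$ times. ${}_{s+1}F_s(a_1,\ldots,a_{s+1};b_1,\ldots,b_s;x)=\sum_{i\geq 0}\frac{(a_1)_i\cdots(a_{s+1})_i}{(b_1)_i\cdots(b_s)_i}\frac{x^i}{i!}$, with $(a)_0=1$, $(a)_i=a(a+1)\cdots(a+i-1)$ for $i>0$ (a finite sum here since $1-k\leq 0$ is an integer). *)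

From HB Require Import structures.
From mathcomp Require Import all_boot all_order all_algebra.
Set Implicit Arguments. Unset Strict Implicit. Unset Printing Implicit Defensive.
Import Order.TTheory GRing.Theory Num.Theory.
Local Open Scope ring_scope.

Definition Hbar_odd (R : fieldType) (n s : nat) : R :=
  \sum_(k < n) (-1) ^+ k / ((2 * k + 1)%:R) ^+ s.

Definition poch (R : pzRingType) (a : R) (i : nat) : R :=
  \prod_(j < i) (a + j%:R).

Definition hyp_term (R : fieldType) (as_ bs : seq R) (x : R) (i : nat) : R :=
  (\prod_(a <- as_) poch a i) / (\prod_(b <- bs) poch b i) * x ^+ i / (i`!)%:R.

(* When one upper
   parameter equals 1-k (k >= 1), all terms with index i >= k vanish, so
   for any N >= k this is the (terminating) hypergeometric function. *)
Definition hypF_sum (R : fieldType) (as_ bs : seq R) (x : R) (N : nat) : R :=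
  \sum_(i < N) hyp_term as_ bs x i.

(* The k-th hypergeometric sum terminates: its i-th term is C(k-1, i) a_i with
   a_i = 1/(2i+1)^s, so it is the binomial transform b_(k-1) of a, where
   b_m = sum_i C(m, i) a_i.  Binomial inversion gives
   sum_k (-1)^k C(m, k) b_k = (-1)^m a_m, and summing this over m < n
   (Pascal's rule, i.e. C(n, k+1) = sum_(m<n) C(m, k)) yields the identity. *)
From HB Require Import structures.
From mathcomp Require Import all_boot all_order all_algebra.
From mathcomp Require Import ring.
Import Order.TTheory GRing.Theory Num.Theory.
Local Open Scope ring_scope.

Lemma sum_binS (V : nmodType) m (f : nat -> V) :
  \sum_(k < m.+2) f k *+ 'C(m.+1, k) = \sum_(k < m.+1) (f k + f k.+1) *+ 'C(m, k).
Proof.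
rewrite big_ord_recl bin0 mulr1n.
under eq_bigr => i _ do rewrite lift0 binS mulrnDr.
under [RHS]eq_bigr => i _ do rewrite mulrnDl.
rewrite !big_split addrA; congr (_ + _).
have -> : \sum_(k < m.+1) f k *+ 'C(m, k) = \sum_(k < m.+2) f k *+ 'C(m, k).
  by rewrite [RHS]big_ord_recr /= bin_small // mulr0n addr0.
by rewrite [RHS]big_ord_recl bin0 mulr1n.
Qed.

Section BinomialInversion.
Context {R : pzRingType}.

Definition binomial_transform (a : nat -> R) (m : nat) : R :=
  \sum_(i < m.+1) a i *+ 'C(m, i).

Lemma binomial_transformS a m :
  binomial_transform a m.+1 =
  binomial_transform a m + binomial_transform (fun i => a i.+1) m.
Proof.
rewrite /binomial_transform sum_binS.
by under eq_bigr do rewrite mulrnDl; rewrite big_split.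
Qed.

Lemma binomial_inversion m a :
  \sum_(k < m.+1) ((-1) ^+ k * binomial_transform a k) *+ 'C(m, k) =
  (-1) ^+ m * a m.
Proof.
elim: m a => [|m IHm] a; first by rewrite big_ord1 /binomial_transform big_ord1.
rewrite (sum_binS _ _ (fun k => (-1) ^+ k * binomial_transform a k)).
rewrite exprS mulN1r mulNr -(IHm (fun i => a i.+1)) -sumrN.
apply: eq_bigr => k _; rewrite -mulNrn; congr (_ *+ _).
by rewrite binomial_transformS exprS mulN1r !mulNr mulrDr opprD addNKr.
Qed.

Lemma sum_signed_binomial_transform n a :
  \sum_(k < n) ((-1) ^+ k * binomial_transform a k) *+ 'C(n, k.+1) =
  \sum_(m < n) (-1) ^+ m * a m.
Proof.
elim: n => [|n IHn]; first by rewrite !big_ord0.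
under eq_bigr do rewrite binS mulrnDr.
rewrite big_split /= binomial_inversion big_ord_recr /= bin_small // mulr0n addr0.
by rewrite IHn [RHS]big_ord_recr.
Qed.

Lemma binomial_transform_widen (a : nat -> R) m N : (m < N)%N ->
  \sum_(i < N) a i *+ 'C(m, i) = binomial_transform a m.
Proof.
move=> ltmN; rewrite /binomial_transform.
rewrite (big_ord_widen N (fun i => a i *+ 'C(m, i)) ltmN) [RHS]big_mkcond.
by apply: eq_bigr => i _; case: ltnP => // ltmi; rewrite bin_small.
Qed.

End BinomialInversion.

Lemma poch_S (R : pzRingType) (a : R) i : poch a i.+1 = a * poch (a + 1) i.
Proof.
rewrite /poch big_ord_recl addr0; congr (_ * _).
by apply: eq_bigr => j _; rewrite lift0 -natr1 (addrC _ 1) addrA.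
Qed.

Lemma poch_Sr (R : pzRingType) (a : R) i : poch a i.+1 = poch a i * (a + i%:R).
Proof. by rewrite /poch big_ord_recr. Qed.

Lemma poch_gt0 (R : numDomainType) (a : R) i : 0 < a -> 0 < poch a i.
Proof. by move=> a_gt0; apply: prodr_gt0 => j _; rewrite ltr_wpDr. Qed.

Lemma poch_oppn (R : comPzRingType) m i :
  poch (- m%:R : R) i = (-1) ^+ i * (m ^_ i)%:R.
Proof.
elim: i => [|i IHi]; first by rewrite /poch big_ord0 mul1r.
rewrite poch_Sr IHi ffactnSr natrM exprS.
have [leim | ltmi] := leqP i m; first by rewrite natrB //; ring.
by rewrite ffact_small // !(mulr0, mul0r).
Qed.

Lemma poch_three_halves (R : numFieldType) i :
  poch (3 / 2 : R) i = poch (1 / 2) i * (2 * i + 1)%:R.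
Proof.
have two_neq0 : (2 : R) != 0 by rewrite pnatr_eq0.
apply: (@mulfI _ (1 / 2)); first by rewrite mul1r invr_eq0.
have -> : (3 / 2 : R) = 1 / 2 + 1 by field.
by rewrite -poch_S poch_Sr natrD natrM; field.
Qed.

Lemma hyp_term_odd_harmonic (R : numFieldType) s m i :
  hyp_term (rcons (nseq s (1 / 2 : R)) (1 - m.+1%:R)) (nseq s (3 / 2)) (-1) i =
  'C(m, i)%:R / (2 * i + 1)%:R ^+ s.
Proof.
rewrite /hyp_term big_rcons /= !big_nseq !iter_mulr_1.
have -> : 1 - m.+1%:R = - m%:R :> R by rewrite -natr1 opprD addrCA subrr addr0.
rewrite poch_oppn -bin_ffact natrM poch_three_halves exprMn.
have half_neq0 : poch (1 / 2 : R) i ^+ s != 0.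
  by rewrite expf_neq0 // gt_eqF // poch_gt0 // divr_gt0.
have odd_neq0 : (2 * i + 1)%:R ^+ s != 0 :> R by rewrite expf_neq0 // pnatr_eq0 addn1.
have fact_neq0 : i`!%:R != 0 :> R by rewrite pnatr_eq0 -lt0n fact_gt0.
(* the sign of poch (- m%:R) i cancels against (-1) ^+ i *)
rewrite -[in RHS](signrMK i 'C(m, i)%:R); field.
by rewrite half_neq0 odd_neq0 fact_neq0.
Qed.

Theorem corollary3p4 (R : realFieldType) (n s : nat) :
  (0 < n)%N -> (0 < s)%N ->
  Hbar_odd R n s =
  \sum_(1 <= k < n.+1)
     (-1) ^+ (k - 1) * ('C(n, k))%:R *
     hypF_sum (rcons (nseq s (1 / 2 : R)) (1 - k%:R)) (nseq s (3 / 2 : R)) (-1) n.+1.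
Proof.
move=> _ _; pose a i := ((2 * i + 1)%:R ^+ s : R)^-1.
rewrite /Hbar_odd -(sum_signed_binomial_transform n a) big_add1 /= big_mkord.
apply: eq_bigr => m _; rewrite subn1 /= -mulr_natr -!mulrA.
rewrite -(binomial_transform_widen a m n.+1 (ltnW (ltn_ord m))).
rewrite [_ * hypF_sum _ _ _ _]mulrC /hypF_sum; congr (_ * (_ * _)).
by apply: eq_bigr => i _; rewrite hyp_term_odd_harmonic mulr_natl.
Qed.
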